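(* Every odd prism is cycle-extendable.
   Context: An odd prism is obtained from two disjoint odd cycles $w_0w_1\cdots w_{2k}w_0$ and $z_0z_1\cdots z_{2k}z_0$ ($k\ge1$) by adding the edges $w_iz_i$ for each $i\in\{0,\dots,2k\}$. A matching covered graph (connected, at least two vertices, every edge in a perfect matching) is cycle-extendable if for every even cycle $C$ the graph $G-V(C)$ has a perfect matching. *)

From mathcomp Require Import all_boot.
Set Implicit Arguments. Unset Strict Implicit. Unset Printing Implicit Defensive.

Definition is_edge (T : finType) (e : rel T) (E : {set T}) : Prop :=
  exists x y, e x y /\ E = [set x; y].

Definition perfect_matching_on (T : finType) (e : rel T) (S : {set T})
  (M : {set {set T}}) : Prop :=
  (forall E, E \in M -> is_edge e E /\ E \subset S) /\
  (forall x, x \in S -> #|[set E in M | x \in E]| = 1).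

Definition perfect_matching (T : finType) (e : rel T) (M : {set {set T}}) :=
  perfect_matching_on e [set: T] M.

Definition matching_covered (T : finType) (e : rel T) : Prop :=
  (forall x y : T, connect e x y) /\ 1 < #|T| /\
  (forall x y : T, e x y ->
     exists M, perfect_matching e M /\ [set x; y] \in M).

Definition is_cycle (T : finType) (e : rel T) (s : seq T) : Prop :=
  uniq s /\ 3 <= size s /\ path.cycle e s.

Definition is_even_cycle (T : finType) (e : rel T) (s : seq T) : Prop :=
  is_cycle e s /\ ~~ odd (size s).

Definition cycle_extendable (T : finType) (e : rel T) : Prop :=
  matching_covered e /\
  forall s : seq T, is_even_cycle e s ->
    exists M, perfect_matching_on e (~: [set x in s]) M.

(* The odd prism on vertices 'I_(2k+1) * bool:
   (i,false) = w_i, (i,true) = z_i. *)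
Definition prism_adj {k : nat} : rel ('I_(k.*2.+1) * bool) :=
  fun u v =>
    ((u.2 == v.2) &&
       ((u.1.+1 %% k.*2.+1 == v.1) || (v.1.+1 %% k.*2.+1 == u.1)))
    || ((u.1 == v.1) && (u.2 != v.2)).

Definition is_odd_prism (T : finType) (e : rel T) : Prop :=
  exists k : nat, 0 < k /\
    exists f : 'I_(k.*2.+1) * bool -> T,
      bijective f /\ forall u v, e (f u) (f v) = prism_adj (k:=k) u v.

(* Let C be an even cycle of the odd prism with columns 'I_(2k+1), let
   [rim b j] say that C uses the edge between columns j and j+1 of rim b, and
   [rung j] that C uses the rung of column j. Every vertex of C has degree 2,
   so [rung j] is the parity of [rim b j + rim b (j-1)] for both b, and hence
   [rim 0 j (+) rim 1 j] does not depend on j. Were it 1, column j would carry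
   [1 + rung j] vertices of C while the number of rungs used is even, so C
   would have odd length. So it is 0: both rims are used alike, and every rung
   has both or none of its ends on C. The rungs then match the vertices off C
   perfectly. *)

From mathcomp Require Import all_boot zify.
Set Implicit Arguments. Unset Strict Implicit. Unset Printing Implicit Defensive.

Lemma perfect_matching_on_involution (T : finType) (e : rel T) (S : {set T})
    (p : T -> T) :
  {in S, forall v, [/\ p v \in S, p (p v) = v & e v (p v)]} ->
  perfect_matching_on e S [set [set v; p v] | v in S].
Proof.
move=> pS; split.
  move=> _ /imsetP [v vS ->]; have [pvS _ e_vpv] := pS v vS; split.
    by exists v, (p v).
  by apply/subsetP => x /set2P [] ->.
move=> x xS; have [pxS ppx _] := pS x xS.
apply/eqP/cards1P; exists [set x; p x]; apply/setP => E; rewrite !inE.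
apply/andP/eqP => [[/imsetP [v vS ->] /set2P [] ->] | ->].
- by [].
- by have [_ -> _] := pS v vS; rewrite setUC.
- by split; [apply: imset_f | rewrite set21].
Qed.

Section Isomorphism.

Variables (T V : finType) (e : rel T) (e' : rel V) (f : V -> T).
Hypotheses (f_bij : bijective f) (f_hom : forall u v, e (f u) (f v) = e' u v).

Let f_inj : injective f := bij_inj f_bij.

Lemma connect_iso u v : connect e' u v -> connect e (f u) (f v).
Proof.
move=> /connectP [p p_path ->]; apply/connectP; exists (map f p).
  by rewrite path_map (eq_path f_hom).
by rewrite last_map.
Qed.

Lemma perfect_matching_on_iso S M :
  perfect_matching_on e' S M ->
  perfect_matching_on e (f @: S) [set f @: E | E : {set V} in M].
Proof.
move=> [M_edges M_cover]; split.
  move=> _ /imsetP [E EM ->]; have [[u [v [uv ->]]] ES] := M_edges E EM.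
  split; last exact: imsetS.
  by exists (f u), (f v); rewrite f_hom imsetU1 imset_set1.
move=> _ /imsetP [v vS ->].
have -> : [set E in [set f @: E | E : {set V} in M] | f v \in E]
          = [set f @: E | E : {set V} in [set E in M | v \in E]].
  apply/setP => E; rewrite inE; apply/andP/imsetP.
    move=> [/imsetP [E' E'M ->]]; rewrite mem_imset // => vE'.
    by exists E'; rewrite // inE E'M.
  move=> [E']; rewrite inE => /andP [E'M vE'] ->.
  by split; [apply: imset_f | rewrite mem_imset].
by rewrite card_imset ?M_cover //; apply: imset_inj.
Qed.

Lemma is_even_cycle_map s : is_even_cycle e (map f s) -> is_even_cycle e' s.
Proof.
rewrite /is_even_cycle /is_cycle map_inj_uniq // size_map cycle_map.
by rewrite (eq_cycle f_hom).
Qed.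

Lemma cycle_extendable_iso : cycle_extendable e' -> cycle_extendable e.
Proof.
have [g fK gK] := f_bij.
have imsetT : f @: [set: V] = [set: T].
  by apply/setP => x; rewrite -(gK x) mem_imset // !inE.
move=> [[conn [card_gt1 edge_pm]] ext]; split; [split; [|split]|].
- by move=> x y; rewrite -(gK x) -(gK y); apply: connect_iso.
- by rewrite -(bij_eq_card f_bij).
- move=> x y; rewrite -(gK x) -(gK y) f_hom => /edge_pm [M [pmM xyM]].
  exists [set f @: E | E : {set V} in M]; split.
    by rewrite /perfect_matching -imsetT; apply: perfect_matching_on_iso.
  by apply/imsetP; exists [set g x; g y]; rewrite // imsetU1 imset_set1.
- move=> s s_even.
  have [M pmM] : exists M, perfect_matching_on e' (~: [set v in map g s]) M.
    by apply/ext/is_even_cycle_map; rewrite -map_comp (eq_map gK) map_id.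
  exists [set f @: E | E : {set V} in M].
  have -> : ~: [set x in s] = f @: ~: [set v in map g s].
    apply/setP => x; rewrite -[in RHS](gK x) mem_imset // !inE.
    by rewrite (mem_map (can_inj gK)).
  exact: perfect_matching_on_iso.
Qed.

End Isomorphism.

Section CycleAdjacency.

Variable T : eqType.

Definition cycle_adj (s : seq T) : rel T :=
  fun u v => [&& u \in s, v \in s & (next s u == v) || (next s v == u)].

Lemma cycle_adj_sym s : symmetric (cycle_adj s).
Proof. by move=> u v; rewrite /cycle_adj andbCA orbC. Qed.

Lemma cycle_adjE s u : uniq s -> u \in s ->
  cycle_adj s u =1 [predU pred1 (next s u) & pred1 (prev s u)].
Proof.
move=> s_uniq u_s v; rewrite /cycle_adj u_s /=.
rewrite (can2_eq (prev_next s_uniq) (next_prev s_uniq) v) (eq_sym (next s u)).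
by apply/andb_idl => /orP [] /eqP ->; rewrite ?mem_next ?mem_prev.
Qed.

Lemma next_neq_prev (s : seq T) x :
  uniq s -> 2 < size s -> x \in s -> next s x != prev s x.
Proof.
move=> s_uniq s_size x_s; have [i p s_rot] := rot_to x_s.
rewrite -(next_rot i s_uniq) -(prev_rot i s_uniq) s_rot.
have : uniq (x :: p) by rewrite -s_rot rot_uniq.
have : 2 < size (x :: p) by rewrite -s_rot size_rot.
case: p {s_rot} => [|a [|b p]] // _ xp_uniq; apply/eqP => next_eq_prev.
have a_neq_x : a != x by apply: contraTneq xp_uniq => ->; rewrite /= inE eqxx.
have := next_prev xp_uniq x; rewrite -next_eq_prev /= eqxx /= (negbTE a_neq_x) eqxx.
by move=> b_eq_x; move: xp_uniq; rewrite b_eq_x /= !inE eqxx orbT.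
Qed.

Lemma count_cycle_adj (e : rel T) (s : seq T) u (N : seq T) :
  symmetric e -> uniq s -> 2 < size s -> cycle e s ->
  uniq N -> (forall v, e u v -> v \in N) ->
  count (cycle_adj s u) N = (u \in s).*2.
Proof.
move=> e_sym s_uniq s_size s_cycle N_uniq N_nbrs.
have [u_s | u_notin_s] := boolP (u \in s); last first.
  rewrite (@eq_count _ _ pred0) ?count_pred0 // => v.
  by rewrite /cycle_adj (negbTE u_notin_s).
rewrite (eq_count (cycle_adjE s_uniq u_s)).
have next_N : next s u \in N by apply/N_nbrs/(next_cycle s_cycle).
have prev_N : prev s u \in N by apply/N_nbrs; rewrite e_sym; apply: prev_cycle.
apply: (@addIn (count (predI (pred1 (next s u)) (pred1 (prev s u))) N)).
rewrite count_predUI !count_uniq_mem // next_N prev_N.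
rewrite (@eq_count _ _ pred0) ?count_pred0 // => v /=; apply/negbTE.
by apply: contra (next_neq_prev s_uniq s_size u_s) => /andP [/eqP <- /eqP <-].
Qed.

End CycleAdjacency.

Lemma ordS_neq_ord_pred n (j : 'I_n) : 2 < n -> ordS j != ord_pred j.
Proof.
move: j => [j lt_jn] n_gt2; rewrite -(inj_eq val_inj) /=.
case: j lt_jn => [|j] lt_jn; first by rewrite !modn_small //; lia.
rewrite addSn /= modnDr (modn_small (ltnW lt_jn)).
case: (ltngtP j.+2 n) => [lt_j2n | lt_nj2 | eq_j2n].
- by rewrite modn_small //; lia.
- by lia.
- by rewrite -eq_j2n modnn; lia.
Qed.

Lemma ordS_invariant_const n (A : Type) (f : 'I_n -> A) :
  (forall j, f (ordS j) = f j) -> forall i j, f i = f j.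
Proof.
move=> fS.
have f_ord0 m (lt_mn : m < n) (n_gt0 : 0 < n) :
    f (Ordinal lt_mn) = f (Ordinal n_gt0).
  elim: m lt_mn => [|m IHm] lt_mn; first by congr f; apply: val_inj.
  rewrite -(IHm (ltnW lt_mn)) -[in RHS]fS; congr f; apply: val_inj.
  by rewrite /= modn_small.
move=> [i lt_in] [j lt_jn]; have n_gt0 := leq_ltn_trans (leq0n i) lt_in.
by rewrite (f_ord0 _ _ n_gt0) (f_ord0 _ lt_jn n_gt0).
Qed.

Lemma sum_addb_ord_pred_even n (f : 'I_n -> bool) :
  ~~ odd (\sum_(j < n) (f j (+) f (ord_pred j))).
Proof.
rewrite (big_morph odd oddD (id2 := 0) erefl) (eq_bigr _ (fun j _ => oddb _)).
rewrite big_split /=.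
suff -> : \big[addb/false]_(j < n) f (ord_pred j) = \big[addb/false]_(j < n) f j.
  by rewrite addbb.
by rewrite [RHS](reindex_inj (@ord_pred_inj n)).
Qed.

(* [rim], [rung] are the edge indicators of a subgraph of the prism ladder in
   which every vertex has degree 0 or 2, and [mem] is its vertex set. *)
Lemma ladder_rows_eq n (rim mem : bool -> 'I_n -> bool) (rung : 'I_n -> bool) :
  odd n ->
  (forall b j, rim b j + rim b (ord_pred j) + rung j = (mem b j).*2) ->
  ~~ odd (\sum_(j < n) (mem false j + mem true j)) ->
  mem false =1 mem true.
Proof.
move=> n_odd deg even_sum.
have rungE b j : rung j = rim b j (+) rim b (ord_pred j).
  move: (congr1 odd (deg b j)); rewrite odd_double !oddD !oddb.
  by case: (rung j) (rim b j) (rim b (ord_pred j)) => [] [] [].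
pose twist j := rim false j (+) rim true j.
have twist_const : forall i j, twist i = twist j.
  apply: ordS_invariant_const => j; rewrite /twist.
  move: (rungE false (ordS j)); rewrite (rungE true (ordS j)) ordSK.
  by case: (rim false j) (rim true j) (rim false (ordS j)) (rim true (ordS j))
    => [] [] [] [].
have [j0 twist_j0 | twist0] := pickP twist; last first.
  have rimE j : rim false j = rim true j.
    by move: (twist0 j); rewrite /twist; case: (rim false j) (rim true j) => [] [].
  move=> j; move: (deg false j); rewrite !rimE deg => /(can_inj doubleK).
  by case: (mem false j) (mem true j) => [] [].
have rim_sum j : rim false j + rim true j = 1.
  move: (twist_const j j0); rewrite twist_j0 /twist.
  by case: (rim false j) (rim true j) => [] [].
have memD j : mem false j + mem true j = 1 + rung j.
  have := deg false j; have := deg true j; have := rim_sum j.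
  have := rim_sum (ord_pred j); lia.
move: even_sum; rewrite (eq_bigr _ (fun j _ => memD j)) big_split /=.
rewrite sum_nat_const card_ord muln1 oddD n_odd.
under eq_bigr => j _ do rewrite (rungE true j).
by rewrite (negbTE (sum_addb_ord_pred_even _)).
Qed.

Lemma size_uniq_bool_pairs (I : finType) (s : seq (I * bool)) : uniq s ->
  size s = \sum_(i : I) (((i, false) \in s) + ((i, true) \in s)).
Proof.
move=> s_uniq; rewrite -(card_uniqP s_uniq) -sum1_card big_mkcond /=.
transitivity (\sum_(p : I * bool) (if (p.1, p.2) \in s then 1 else 0)).
  by apply: eq_bigr => -[].
rewrite -(pair_bigA _ (fun i b => if (i, b) \in s then 1 else 0)).
apply: eq_bigr => i _.
by rewrite big_bool; case: ((i, true) \in s); case: ((i, false) \in s).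
Qed.

Section OddPrism.

Variable k : nat.

Local Notation n := k.*2.+1.
Local Notation adj := (@prism_adj k).

Lemma prism_adj_sym : symmetric adj.
Proof.
by move=> u v; rewrite /prism_adj (eq_sym u.2) (eq_sym u.1) (orbC (_ %% _ == _)).
Qed.

Lemma prism_adjE (j : 'I_n) b w :
  adj (j, b) w = (w \in [:: (ordS j, b); (ord_pred j, b); (j, ~~ b)]).
Proof.
case: w => j' b'; rewrite /prism_adj /= !inE !xpair_eqE.
have -> : (j.+1 %% n == j') = (j' == ordS j) by rewrite eq_sym.
have -> : (j'.+1 %% n == j) = (j' == ord_pred j).
  by rewrite -(inj_eq (@ordS_inj _)) ord_predK.
by case: b b' => [] []; rewrite (eq_sym j) ?andbT ?andbF ?orbF.
Qed.

Lemma prism_connected u v : connect adj u v.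
Proof.
have rung_conn w : connect adj (w.1, false) w.
  case: w => j [|]; last exact: connect0.
  by apply: connect1; rewrite prism_adjE !inE eqxx !orbT.
have rim_conn : forall i j : 'I_n,
    connect adj (u.1, false) (i, false) = connect adj (u.1, false) (j, false).
  apply: ordS_invariant_const => j; apply/esym/same_connect_r.
    exact/sym_connect_sym/prism_adj_sym.
  by apply: connect1; rewrite prism_adjE !inE eqxx.
apply: connect_trans (rung_conn v); apply: (connect_trans (y := (u.1, false))).
  by rewrite (sym_connect_sym prism_adj_sym); apply: rung_conn.
by rewrite (rim_conn v.1 u.1).
Qed.

Hypothesis k_gt0 : 0 < k.

Let n_gt2 : 2 < n. Proof. by rewrite -addnn; lia. Qed.

Lemma uniq_prism_nbrs (j : 'I_n) b :
  uniq [:: (ordS j, b); (ord_pred j, b); (j, ~~ b)].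
Proof.
rewrite /= !inE !xpair_eqE (negbTE (ordS_neq_ord_pred j n_gt2)) /=.
by case: b; rewrite ?andbF.
Qed.

Lemma prism_even_cycle_rungs s :
  is_even_cycle adj s -> forall j, ((j, false) \in s) = ((j, true) \in s).
Proof.
move=> [[s_uniq [s_size s_cycle]] s_even].
pose rim b j := cycle_adj s (j, b) (ordS j, b).
pose rung j := cycle_adj s (j, false) (j, true).
apply: (@ladder_rows_eq n rim (fun b j => (j, b) \in s) rung).
- by rewrite /= odd_double.
- move=> b j; rewrite -(count_cycle_adj prism_adj_sym s_uniq s_size s_cycle
    (uniq_prism_nbrs j b)); last by move=> w; rewrite prism_adjE.
  rewrite /= addn0 addnA /rim (cycle_adj_sym _ (ord_pred j, b)) ord_predK /rung.
  by case: b; rewrite //= [cycle_adj s (j, true) (j, false)]cycle_adj_sym.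
- by rewrite -(size_uniq_bool_pairs s_uniq).
Qed.

Lemma prism_rung_matching (S : {set 'I_n * bool}) :
  (forall j, ((j, false) \in S) = ((j, true) \in S)) ->
  perfect_matching_on adj S [set [set v; (v.1, ~~ v.2)] | v in S].
Proof.
move=> S_rungs; apply: perfect_matching_on_involution => -[j b] jb_S /=.
rewrite negbK prism_adjE !inE eqxx !orbT; split=> //.
by case: b jb_S; rewrite S_rungs.
Qed.

Lemma prism_rim_matching (j : 'I_n) b :
  exists M, perfect_matching adj M /\ [set (j, b); (ordS j, b)] \in M.
Proof.
pose p w := if w.1 == j then (ordS j, w.2)
            else if w.1 == ordS j then (j, w.2) else (w.1, ~~ w.2).
have Sj_neq_j : (ordS j == j) = false.
  apply: contraNF (ordS_neq_ord_pred j n_gt2) => /eqP Sj_eq_j.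
  by rewrite -[in ord_pred j]Sj_eq_j ordSK Sj_eq_j.
exists [set [set v; p v] | v in [set: 'I_n * bool]]; split.
  apply: perfect_matching_on_involution => -[i c] _; rewrite !inE /p /=.
  have [-> | i_neq_j] := eqVneq i j.
    by rewrite Sj_neq_j !eqxx prism_adjE !inE eqxx.
  have [-> | i_neq_Sj] := eqVneq i (ordS j).
    by rewrite eqxx prism_adjE ordSK !inE eqxx orbT.
  by rewrite (negbTE i_neq_j) (negbTE i_neq_Sj) negbK prism_adjE !inE eqxx !orbT.
by apply/imsetP; exists (j, b); rewrite ?inE // /p /= eqxx.
Qed.

Lemma prism_edge_matching u v :
  adj u v -> exists M, perfect_matching adj M /\ [set u; v] \in M.
Proof.
case: u => j b; rewrite prism_adjE !inE => /or3P [] /eqP ->.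
- exact: prism_rim_matching.
- by rewrite setUC -[in (j, b)](ord_predK j); apply: prism_rim_matching.
- exists [set [set v; (v.1, ~~ v.2)] | v in [set: 'I_n * bool]]; split.
    by apply: prism_rung_matching => i; rewrite !inE.
  by apply/imsetP; exists (j, b); rewrite ?inE.
Qed.

Lemma prism_cycle_extendable : cycle_extendable adj.
Proof.
split; [split; [|split]|].
- exact: prism_connected.
- by rewrite card_prod card_ord card_bool muln2.
- exact: prism_edge_matching.
- move=> s s_even; exists [set [set v; (v.1, ~~ v.2)] | v in ~: [set x in s]].
  by apply: prism_rung_matching => j; rewrite !inE prism_even_cycle_rungs.
Qed.

End OddPrism.

Theorem proposition4p3 (T : finType) (e : rel T) :
  is_odd_prism e -> cycle_extendable e.
Proof.
move=> [k [k_gt0 [f [f_bij f_hom]]]].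
exact: (cycle_extendable_iso f_bij f_hom (prism_cycle_extendable k_gt0)).
Qed.
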